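(* Let $\{S;\tilde w_1,\dots,\tilde w_N;p_1,\dots,p_N\}$ be a DIFS with associated Markov chain $\{\tilde X_k\}$, and let $C\subset S$ be nonempty. (a) $C$ is a closed class of $\{\tilde X_k\}$ if and only if $\bigcup_{i=1}^N\tilde w_i(C)\subset C$. (b) If $C$ is a communication class of $\{\tilde X_k\}$, then $\bigcup_{i=1}^N\tilde w_i(C)\supset C$.
   Context: $\mathcal D^n(\delta)=\{\delta m:m\in\mathbb Z^n\}$ for fixed $\delta>0$. A DIFS $\{S;\tilde w_1,\dots,\tilde w_N;p_1,\dots,p_N\}$ consists of $S\subset\mathcal D^n(\delta)$, maps $\tilde w_i:S\to S$, and functions $p_i:S\to(0,1]$ with $\sum_ip_i(\tilde x)=1$ for every $\tilde x\in S$; its associated Markov chain on $S$ has transition probabilities $P(\tilde x,\tilde y)=\sum_ip_i(\tilde x)\mathbf 1_{\{\tilde y\}}(\tilde w_i(\tilde x))$. A state $\tilde y$ is accessible from $\tilde x$ if $P^k(\tilde x,\tilde y)>0$ for some integer $k\ge1$. A communication class is a maximal nonempty subset $C$ such that for all $\tilde x,\tilde y\in C$ (not necessarily distinct) $\tilde y$ is accessible from $\tilde x$. A closed class is a nonempty subset $C$ such that every state accessible from a state of $C$ belongs to $C$. *)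

From HB Require Import structures.
From mathcomp Require Import all_boot all_order all_algebra.
From mathcomp Require Import reals.
Set Implicit Arguments. Unset Strict Implicit. Unset Printing Implicit Defensive.
Import Order.TTheory GRing.Theory Num.Theory.
Local Open Scope ring_scope.

Definition lattice (R : realType) (n : nat) (delta : R) (x : 'rV[R]_n) : Prop :=
  exists m : 'rV[int]_n, x = delta *: map_mx (fun z : int => z%:~R) m.

Definition is_DIFS (R : realType) (n : nat) (delta : R) (S : 'rV[R]_n -> Prop)
  (N : nat) (w : 'I_N -> 'rV[R]_n -> 'rV[R]_n) (p : 'I_N -> 'rV[R]_n -> R) : Prop :=
  [/\ 0 < delta,
      (forall x, S x -> lattice delta x),
      (forall i x, S x -> S (w i x)),
      (forall i x, S x -> 0 < p i x <= 1) &
      (forall x, S x -> \sum_(i < N) p i x = 1)].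

Definition trans (R : realType) (n N : nat) (w : 'I_N -> 'rV[R]_n -> 'rV[R]_n)
  (p : 'I_N -> 'rV[R]_n -> R) (x y : 'rV[R]_n) : R :=
  \sum_(i < N) p i x * (w i x == y)%:R.

(* The matrix product
   P^(k+1)(x,y) = sum_z P(x,z) P^k(z,y) has, for each x, only the finitely many
   nonzero terms z = w_i(x); collecting them gives sum_i p_i(x) P^k(w_i x, y). *)
Fixpoint transk (R : realType) (n N : nat) (w : 'I_N -> 'rV[R]_n -> 'rV[R]_n)
  (p : 'I_N -> 'rV[R]_n -> R) (k : nat) (x y : 'rV[R]_n) : R :=
  match k with
  | 0 => (x == y)%:R
  | k'.+1 => \sum_(i < N) p i x * transk w p k' (w i x) y
  end.

Definition accessible (R : realType) (n N : nat) (w : 'I_N -> 'rV[R]_n -> 'rV[R]_n)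
  (p : 'I_N -> 'rV[R]_n -> R) (x y : 'rV[R]_n) : Prop :=
  exists k : nat, (1 <= k)%N /\ 0 < transk w p k x y.

Definition closed_class (R : realType) (n N : nat) (S : 'rV[R]_n -> Prop)
  (w : 'I_N -> 'rV[R]_n -> 'rV[R]_n) (p : 'I_N -> 'rV[R]_n -> R)
  (C : 'rV[R]_n -> Prop) : Prop :=
  [/\ (exists x, C x), (forall x, C x -> S x) &
      (forall x y, C x -> S y -> accessible w p x y -> C y)].

Definition communicating (R : realType) (n N : nat)
  (w : 'I_N -> 'rV[R]_n -> 'rV[R]_n) (p : 'I_N -> 'rV[R]_n -> R)
  (C : 'rV[R]_n -> Prop) : Prop :=
  forall x y, C x -> C y -> accessible w p x y.

Definition comm_class (R : realType) (n N : nat) (S : 'rV[R]_n -> Prop)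
  (w : 'I_N -> 'rV[R]_n -> 'rV[R]_n) (p : 'I_N -> 'rV[R]_n -> R)
  (C : 'rV[R]_n -> Prop) : Prop :=
  [/\ (exists x, C x), (forall x, C x -> S x), communicating w p C &
      (forall D : 'rV[R]_n -> Prop, (forall x, D x -> S x) ->
         (forall x, C x -> D x) -> communicating w p D ->
         forall x, D x -> C x)].

(** The chain moves from [x] to [w i x] with probability [p i x > 0], so
    [P^k(x, y) > 0] exactly when [y] is reached from [x] by composing [k] of
    the maps.  Hence a set is closed iff it is invariant under every [w i].
    For (b), a state [y] of a communication class [C] returns to itself, and
    the state [z] visited just before the return satisfies [w j z = y]; [z]
    communicates with [C], so [z] lies in [C] by maximality. *)
From HB Require Import structures.
From mathcomp Require Import all_boot all_order all_algebra.
From mathcomp Require Import reals.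
Import Order.TTheory GRing.Theory Num.Theory.
Local Open Scope ring_scope.

Section Reach.
Variables (T : Type) (N : nat) (w : 'I_N -> T -> T).

Fixpoint reach (k : nat) (x y : T) : Prop :=
  if k is k'.+1 then exists i, reach k' (w i x) y else x = y.

Lemma reach_add k m x z y : reach k x z -> reach m z y -> reach (k + m) x y.
Proof.
elim: k x => [|k IH] x /=; first by move=> ->.
by move=> [i Hi] Hm; exists i; exact: IH Hi Hm.
Qed.

Lemma reachSr k x y : reach k.+1 x y -> exists z j, reach k x z /\ w j z = y.
Proof.
elim: k x => [|k IH] x /=; first by move=> [i <-]; exists x, i.
move=> [i /IH [z [j [Hz Hzy]]]].
by exists z, j; split => //; exists i.
Qed.

Lemma reach_stable (C : T -> Prop) k x y :
  (forall i x, C x -> C (w i x)) -> C x -> reach k x y -> C y.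
Proof.
move=> wC; elim: k x => [|k IH] x Cx /=; first by move=> <-.
by move=> [i]; apply: IH; exact: wC.
Qed.

End Reach.

Arguments reach {T N}.
Arguments reach_add {T N w k m x z y}.
Arguments reachSr {T N w k x y}.
Arguments reach_stable {T N w C k x y}.

Section Chain.
Variables (R : realType) (n N : nat) (S : 'rV[R]_n -> Prop).
Variables (w : 'I_N -> 'rV[R]_n -> 'rV[R]_n) (p : 'I_N -> 'rV[R]_n -> R).
Hypothesis wS : forall i x, S x -> S (w i x).
Hypothesis p_gt0 : forall i x, S x -> 0 < p i x.

Lemma transk_ge0 k {x} y : S x -> 0 <= transk w p k x y.
Proof.
elim: k x => [|k IH] x Sx /=; first exact: ler0n.
apply: sumr_ge0 => i _; apply: mulr_ge0; first exact/ltW/p_gt0.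
exact/IH/wS.
Qed.

Lemma transk_gt0 k {x y} : S x -> 0 < transk w p k x y <-> reach w k x y.
Proof.
elim: k x => [|k IH] x Sx /=.
  by split; [case: eqP => // _; rewrite ltxx | move=> ->; rewrite eqxx ltr01].
have terms_ge0 i : true -> 0 <= p i x * transk w p k (w i x) y.
  by move=> _; apply: mulr_ge0; [exact/ltW/p_gt0 | exact/transk_ge0/wS].
rewrite lt0r sumr_ge0 // andbT psumr_neq0 //.
split => [/hasP [i _ /=] | [i /IH Hi]].
  by rewrite pmulr_rgt0 ?p_gt0 // => /IH Hi; exists i; exact/Hi/wS.
by apply/hasP; exists i; rewrite ?mem_index_enum //= pmulr_rgt0 ?p_gt0 //;
  exact/Hi/wS.
Qed.

Lemma accessibleP {x y} :
  S x -> accessible w p x y <-> exists2 k, (0 < k)%N & reach w k x y.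
Proof.
move=> Sx; split=> [[k [k_gt0 /(transk_gt0 _ Sx) ?]] | [k k_gt0 /(transk_gt0 _ Sx) ?]];
  by exists k.
Qed.

Lemma accessible_step i {x} : S x -> accessible w p x (w i x).
Proof. by move=> Sx; apply/accessibleP => //; exists 1%N => //; exists i. Qed.

Lemma accessible_reach {k x y z} :
  S x -> accessible w p x y -> reach w k y z -> accessible w p x z.
Proof.
move=> Sx /(accessibleP Sx) [m m_gt0 Hxy] Hyz; apply/accessibleP => //.
by exists (m + k)%N; [exact: ltn_addr | exact: reach_add Hxy Hyz].
Qed.

Lemma accessible_trans {x y z} :
  S x -> S y -> accessible w p x y -> accessible w p y z -> accessible w p x z.
Proof.
move=> Sx Sy Hxy /(accessibleP Sy) [k _ Hyz]; exact: accessible_reach Hxy Hyz.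
Qed.

Lemma closed_classP (C : 'rV[R]_n -> Prop) :
  (exists x, C x) -> (forall x, C x -> S x) ->
  closed_class S w p C <-> (forall i x, C x -> C (w i x)).
Proof.
move=> Cne CS; split => [[_ _ Cclosed] i x Cx | wC].
  exact: Cclosed x (w i x) Cx (wS i x (CS x Cx)) (accessible_step i (CS x Cx)).
split=> // x y Cx _ /(accessibleP (CS _ Cx)) [k _].
exact: reach_stable wC Cx.
Qed.

Lemma comm_class_sub_image (C : 'rV[R]_n -> Prop) y :
  comm_class S w p C -> C y -> exists i x, C x /\ w i x = y.
Proof.
move=> [_ CS Ccomm Cmax] Cy; have Sy := CS _ Cy.
have Hyy := Ccomm _ _ Cy Cy.
have /(accessibleP Sy) [[//|k] _ /reachSr [z [j [Hyz Hzy]]]] := Hyy.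
exists j, z; split => //.
have Sz : S z := reach_stable wS Sy Hyz.
pose D a := C a \/ a = z.
have DS a : D a -> S a by case=> [/CS | ->].
have to_y a : D a -> accessible w p a y.
  by case=> [Ca | ->]; [exact: Ccomm | rewrite -Hzy; exact: accessible_step].
have from_y b : D b -> accessible w p y b.
  by case=> [Cb | ->]; [exact: Ccomm | exact: accessible_reach Hyy Hyz].
have Dcomm : communicating w p D.
  by move=> a b Da Db; exact: accessible_trans (DS _ Da) Sy (to_y _ Da) (from_y _ Db).
by apply: (Cmax D DS _ Dcomm); [move=> x Cx; left | right].
Qed.

End Chain.

Arguments closed_classP {R n N S w p}.
Arguments comm_class_sub_image {R n N S w p}.

Theorem theorem11 (R : realType) (n : nat) (delta : R) (S : 'rV[R]_n -> Prop)
  (N : nat) (w : 'I_N -> 'rV[R]_n -> 'rV[R]_n) (p : 'I_N -> 'rV[R]_n -> R)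
  (C : 'rV[R]_n -> Prop) :
  is_DIFS delta S w p ->
  (forall x, C x -> S x) -> (exists x, C x) ->
  (closed_class S w p C <-> (forall (i : 'I_N) x, C x -> C (w i x))) /\
  (comm_class S w p C -> forall y, C y -> exists (i : 'I_N) x, C x /\ w i x = y).
Proof.
move=> [_ _ wS p_bound _] CS Cne.
have p_gt0 i x : S x -> 0 < p i x by move=> /(p_bound i) /andP [].
split; first exact: closed_classP wS p_gt0 C Cne CS.
by move=> Ccomm y; exact: comm_class_sub_image wS p_gt0 C y Ccomm.
Qed.
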